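(* Let $G_n$ be a finite simple graph on $n\ge1$ vertices and let $x\in V(G_n)$ be a dominating vertex. Then for every $t\ge0$ and $y\in V(G_n)$, $$P^x_{G_n,t}(y)=\begin{cases}1-\dfrac2n\left(1-\dfrac1n\right)(1-\cos nt), & y=x,\\[2mm] \dfrac{2}{n^2}(1-\cos nt), & y\ne x.\end{cases}$$ In particular, for any sequence of graphs $G_n$ with $n\to\infty$ vertices and dominating vertices $x_n\in V(G_n)$, $\lim_{n\to\infty}P^{x_n}_{G_n,t}(x_n)=1$ for every fixed $t\ge0$.
   Context: For a finite simple graph $G$, $L_G=D_G-A_G$ is its Laplacian ($A_G$ adjacency matrix, $D_G$ diagonal degree matrix). The continuous-time quantum walk (CTQW) on $G$ has evolution operator $U_{G,t}=e^{\sqrt{-1}\,tL_G}$ ($t\ge0$), and the transition probability is $P^x_{G,t}(y)=|(U_{G,t})_{x,y}|^2$ for $x,y\in V(G)$. A vertex of a graph on $n$ vertices is dominating if its degree is $n-1$, i.e., it is adjacent to all other vertices. *)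

From Stdlib Require Import Reals Lra Factorial List.
Open Scope R_scope.

Fixpoint rsum (n : nat) (f : nat -> R) : R :=
  match n with O => 0 | S m => rsum m f + f m end.

(* Complex numbers as pairs (real part, imaginary part). *)
Definition C := (R * R)%type.
Definition C0 : C := (0, 0).
Definition C1 : C := (1, 0).
Definition cadd (a b : C) : C := (fst a + fst b, snd a + snd b).
Definition cmul (a b : C) : C :=
  (fst a * fst b - snd a * snd b, fst a * snd b + snd a * fst b).
Definition cscale (r : R) (a : C) : C := (r * fst a, r * snd a).
Definition cnorm2 (a : C) : R := fst a ^ 2 + snd a ^ 2.
Fixpoint csum (n : nat) (f : nat -> C) : C :=
  match n with O => C0 | S m => cadd (csum m f) (f m) end.

(* A finite simple graph on vertex set {0,...,n-1}: adjacency relation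
   [adj] that is symmetric and loopless (values outside range unused). *)
Definition simple_graph (adj : nat -> nat -> bool) : Prop :=
  (forall i j, adj i j = adj j i) /\ (forall i, adj i i = false).

Definition deg (n : nat) (adj : nat -> nat -> bool) (i : nat) : nat :=
  List.length (List.filter (fun j => adj i j) (List.seq 0 n)).

Definition dominating (n : nat) (adj : nat -> nat -> bool) (x : nat) : Prop :=
  (x < n)%nat /\ deg n adj x = (n - 1)%nat.

Definition laplacian (n : nat) (adj : nat -> nat -> bool) (i j : nat) : R :=
  (if Nat.eqb i j then INR (deg n adj i) else 0) - (if adj i j then 1 else 0).

Definition cmat := nat -> nat -> C.
Definition cmatmul (n : nat) (A B : cmat) : cmat :=
  fun i j => csum n (fun k => cmul (A i k) (B k j)).
Definition cmatid : cmat := fun i j => if Nat.eqb i j then C1 else C0.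
Fixpoint cmatpow (n : nat) (A : cmat) (k : nat) : cmat :=
  match k with O => cmatid | S k' => cmatmul n (cmatpow n A k') A end.

Definition itL (n : nat) (adj : nat -> nat -> bool) (t : R) : cmat :=
  fun i j => (0, t * laplacian n adj i j).

Definition expser (n : nat) (adj : nat -> nat -> bool) (t : R) (x y : nat)
  (N : nat) : C :=
  csum (S N) (fun k => cscale (/ INR (fact k)) (cmatpow n (itL n adj t) k x y)).

(* U_{G,t} = e^{i t L_G}: [walk_entry ... u] says the (x,y) entry of the
   exponential series converges to u. *)
Definition walk_entry (n : nat) (adj : nat -> nat -> bool) (t : R) (x y : nat)
  (u : C) : Prop :=
  Un_cv (fun N => fst (expser n adj t x y N)) (fst u) /\
  Un_cv (fun N => snd (expser n adj t x y N)) (snd u).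

(* P^x_{G,t}(y) = p : the entry (U_{G,t})_{x,y} exists and |.|^2 = p. *)
Definition transition_prob (n : nat) (adj : nat -> nat -> bool) (t : R)
  (x y : nat) (p : R) : Prop :=
  exists u : C, walk_entry n adj t x y u /\ p = cnorm2 u.

(* If x is dominating, row x of L_G equals n (e_x - 1/n), and the vector
   v = e_x - 1/n is a left eigenvector of L_G for the eigenvalue n, because the
   columns of L_G sum to zero.  Writing e_x = v + 1/n, where the constant vector
   is killed by L_G, gives e_x U_{G,t} = e^{int} v + 1/n, whose entries have the
   stated squared moduli.  The return probability differs from 1 by at most 4/n. *)

From Pilot Require Import Defs.
From Stdlib Require Import Reals Lra Lia List Factorial.
Open Scope R_scope.

Lemma C_ext (a b : Defs.C) : fst a = fst b -> snd a = snd b -> a = b.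
Proof. destruct a, b; simpl; intros -> ->; reflexivity. Qed.

Lemma rsum_ext n f g :
  (forall m, (m < n)%nat -> f m = g m) -> rsum n f = rsum n g.
Proof. induction n; simpl; intros H; auto. rewrite IHn, H; auto. Qed.

Lemma rsum_add n f g : rsum n (fun m => f m + g m) = rsum n f + rsum n g.
Proof. induction n; simpl; [ring | rewrite IHn; ring]. Qed.

Lemma rsum_sub n f g : rsum n (fun m => f m - g m) = rsum n f - rsum n g.
Proof. induction n; simpl; [ring | rewrite IHn; ring]. Qed.

Lemma rsum_mult_l n c f : rsum n (fun m => c * f m) = c * rsum n f.
Proof. induction n; simpl; [ring | rewrite IHn; ring]. Qed.

Lemma rsum_const n c : rsum n (fun _ => c) = INR n * c.
Proof. induction n; simpl rsum; [simpl; ring | rewrite IHn, S_INR; ring]. Qed.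

Lemma rsum_le n f g :
  (forall m, (m < n)%nat -> f m <= g m) -> rsum n f <= rsum n g.
Proof.
  induction n; simpl; intros H; [lra |].
  assert (rsum n f <= rsum n g) by (apply IHn; intros; apply H; lia).
  specialize (H n (Nat.lt_succ_diag_r n)). lra.
Qed.

Lemma rsum_delta n x f :
  rsum n (fun m => if Nat.eqb m x then f m else 0) =
  if Nat.ltb x n then f x else 0.
Proof.
  induction n; simpl; [reflexivity |]. rewrite IHn.
  destruct (Nat.eqb_spec n x), (Nat.ltb_spec x n), (Nat.ltb_spec x (S n));
    subst; try lia; ring.
Qed.

Lemma rsum_delta_lt n x f :
  (x < n)%nat -> rsum n (fun m => if Nat.eqb m x then f m else 0) = f x.
Proof. intros Hx. rewrite rsum_delta. now destruct (Nat.ltb_spec x n); [| lia]. Qed.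

Lemma fst_csum n f : fst (csum n f) = rsum n (fun m => fst (f m)).
Proof. induction n; simpl; auto. rewrite IHn; auto. Qed.

Lemma snd_csum n f : snd (csum n f) = rsum n (fun m => snd (f m)).
Proof. induction n; simpl; auto. rewrite IHn; auto. Qed.

Lemma csum_ext n f g :
  (forall m, (m < n)%nat -> f m = g m) -> csum n f = csum n g.
Proof. induction n; simpl; intros H; auto. rewrite IHn, H; auto. Qed.

Lemma Un_cv_const c : Un_cv (fun _ => c) c.
Proof.
  intros eps Heps. exists O. intros n _. unfold R_dist.
  rewrite Rminus_diag, Rabs_R0. exact Heps.
Qed.

Lemma Un_cv_affine (a b : nat -> R) L c d :
  (forall N, b N = c * a N + d) -> Un_cv a L -> Un_cv b (c * L + d).
Proof.
  intros Hb Ha. apply Un_cv_ext with (fun N => c * a N + d); [auto |].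
  apply CV_plus; [apply CV_mult |]; auto using Un_cv_const.
Qed.

Lemma Un_cv_even_odd (a c : nat -> R) L :
  (forall M, a (2 * M)%nat = c M /\ a (2 * M + 1)%nat = c M) ->
  Un_cv c L -> Un_cv a L.
Proof.
  intros H Hc eps Heps. destruct (Hc eps Heps) as [N0 HN].
  exists (2 * N0)%nat. intros n Hn.
  destruct (Nat.Even_or_Odd n) as [[m Hm] | [m Hm]]; subst n.
  - rewrite (proj1 (H m)). apply HN. lia.
  - rewrite (proj2 (H m)). apply HN. lia.
Qed.

Lemma Un_cv_shift (a : nat -> R) L : Un_cv (fun N => a (S N)) L -> Un_cv a L.
Proof.
  intros H eps Heps. destruct (H eps Heps) as [N0 HN].
  exists (S N0). intros n Hn. destruct n; [lia |]. apply HN. lia.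
Qed.

Lemma Un_cv_inv_bound (u : nat -> R) L K :
  (forall n, (1 <= n)%nat -> Rabs (u n - L) <= K / INR n) -> Un_cv u L.
Proof.
  intros Hu eps Heps. pose proof (Rabs_pos K) as HK. pose proof (Rle_abs K).
  destruct (archimed_cor1 (eps / (Rabs K + 1))) as [N [HN HN0]].
  { apply Rdiv_lt_0_compat; lra. }
  exists N. intros n Hn. unfold R_dist.
  assert (HnN : INR N <= INR n) by (apply le_INR; lia).
  assert (HN0' : 0 < INR N) by (apply lt_0_INR; lia).
  assert (Hr : 0 < / INR n <= / INR N)
    by (split; [apply Rinv_0_lt_compat | apply Rinv_le_contravar]; lra).
  assert (Heps' : (Rabs K + 1) * (eps / (Rabs K + 1)) = eps) by (field; lra).
  specialize (Hu n ltac:(lia)). unfold Rdiv in Hu. nra.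
Qed.

Fixpoint cpow (z : Defs.C) (k : nat) : Defs.C :=
  match k with O => Defs.C1 | S k => cmul (cpow z k) z end.

Lemma cpow_imag th j :
  cpow (0, th) (2 * j) = ((-1) ^ j * th ^ (2 * j), 0) /\
  cpow (0, th) (2 * j + 1) = (0, (-1) ^ j * th ^ (2 * j + 1)).
Proof.
  induction j as [| j [_ Hodd]].
  - split; apply C_ext; simpl; ring.
  - replace (2 * S j)%nat with (S (2 * j + 1)) by lia.
    replace (S (2 * j + 1) + 1)%nat with (S (S (2 * j + 1))) by lia.
    cbn [cpow]. rewrite Hodd.
    split; apply C_ext; unfold cmul; simpl; rewrite ?pow_add; simpl; ring.
Qed.

Definition expi_partial (th : R) (N : nat) : Defs.C :=
  csum (S N) (fun k => cscale (/ INR (fact k)) (cpow (0, th) k)).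

Lemma expi_partial_S th N : expi_partial th (S N) =
  cadd (expi_partial th N) (cscale (/ INR (fact (S N))) (cpow (0, th) (S N))).
Proof. reflexivity. Qed.

Lemma expi_partial_fst th M :
  fst (expi_partial th (2 * M)) = A1 th M /\
  fst (expi_partial th (2 * M + 1)) = A1 th M.
Proof.
  induction M as [| M [_ IH]].
  - unfold A1. simpl. split; field.
  - replace (2 * S M)%nat with (S (2 * M + 1)) by lia.
    replace (S (2 * M + 1) + 1)%nat with (S (S (2 * M + 1))) by lia.
    rewrite !expi_partial_S. cbn [cadd cscale fst]. rewrite IH.
    replace (S (2 * M + 1)) with (2 * S M)%nat by lia.
    replace (S (2 * S M)) with (2 * S M + 1)%nat by lia.
    destruct (cpow_imag th (S M)) as [-> ->].
    unfold A1. cbn [sum_f_R0 fst]. fold (A1 th M). split; unfold Rdiv; ring.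
Qed.

Lemma expi_partial_snd th M :
  snd (expi_partial th (2 * M + 1)) = B1 th M /\
  snd (expi_partial th (2 * M + 2)) = B1 th M.
Proof.
  induction M as [| M [_ IH]].
  - unfold B1. simpl. split; field.
  - replace (2 * S M + 1)%nat with (S (2 * M + 2)) by lia.
    replace (2 * S M + 2)%nat with (S (S (2 * M + 2))) by lia.
    rewrite !expi_partial_S. cbn [cadd cscale snd]. rewrite IH.
    replace (S (2 * M + 2)) with (2 * S M + 1)%nat by lia.
    replace (S (2 * S M + 1)) with (2 * S (S M))%nat by lia.
    rewrite (proj2 (cpow_imag th (S M))), (proj1 (cpow_imag th (S (S M)))).
    unfold B1. cbn [sum_f_R0 snd]. fold (B1 th M). split; unfold Rdiv; ring.
Qed.

Lemma expi_partial_cos th : Un_cv (fun N => fst (expi_partial th N)) (cos th).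
Proof. apply Un_cv_even_odd with (A1 th); [apply expi_partial_fst | apply A1_cvg]. Qed.

Lemma expi_partial_sin th : Un_cv (fun N => snd (expi_partial th N)) (sin th).
Proof.
  apply Un_cv_shift, Un_cv_even_odd with (B1 th); [| apply B1_cvg].
  intro M. replace (S (2 * M)) with (2 * M + 1)%nat by lia.
  replace (S (2 * M + 1)) with (2 * M + 2)%nat by lia.
  apply expi_partial_snd.
Qed.

Lemma deg_rsum n adj i :
  INR (deg n adj i) = rsum n (fun j => if adj i j then 1 else 0).
Proof.
  unfold deg. induction n; [reflexivity |].
  rewrite seq_S, filter_app, length_app, plus_INR, IHn. simpl.
  destruct (adj i n); simpl; ring.
Qed.

Lemma laplacian_col_sum n adj y : simple_graph adj -> (y < n)%nat ->
  rsum n (fun m => laplacian n adj m y) = 0.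
Proof.
  intros [Hsym _] Hy. unfold laplacian.
  rewrite rsum_sub, (rsum_delta_lt n y (fun m => INR (deg n adj m))), deg_rsum
    by exact Hy.
  rewrite (rsum_ext n (fun m => if adj m y then 1 else 0)
                      (fun j => if adj y j then 1 else 0)); [ring |].
  intros m _. now rewrite Hsym.
Qed.

Lemma dominating_adj n adj x y : simple_graph adj -> dominating n adj x ->
  (y < n)%nat -> y <> x -> adj x y = true.
Proof.
  intros [_ Hloop] [Hx Hdeg] Hy Hyx. destruct (adj x y) eqn:Exy; auto. exfalso.
  assert (Hle : INR (deg n adj x) <= rsum n (fun j =>
            1 - (if Nat.eqb j x then 1 else 0) - (if Nat.eqb j y then 1 else 0))).
  { rewrite deg_rsum. apply rsum_le. intros m Hm.
    destruct (Nat.eqb_spec m x), (Nat.eqb_spec m y); subst; try lia.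
    - rewrite Hloop. lra.
    - rewrite Exy. lra.
    - destruct (adj x m); lra. }
  rewrite !rsum_sub, rsum_const, (rsum_delta_lt n x (fun _ => 1)),
    (rsum_delta_lt n y (fun _ => 1)), Hdeg, minus_INR in Hle by lia.
  simpl in Hle. lra.
Qed.

Definition centered_indicator (n x m : nat) : R :=
  (if Nat.eqb m x then 1 else 0) - / INR n.

Lemma laplacian_dominating_row n adj x y : simple_graph adj ->
  dominating n adj x -> (y < n)%nat ->
  laplacian n adj x y = INR n * centered_indicator n x y.
Proof.
  intros G D Hy. pose proof D as [Hx Hdeg]. unfold laplacian, centered_indicator.
  assert (INR n <> 0) by (apply not_0_INR; lia).
  destruct (Nat.eqb_spec x y), (Nat.eqb_spec y x); try lia.
  - subst. rewrite (proj2 G), Hdeg, minus_INR by lia. simpl. field. auto.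
  - rewrite (dominating_adj n adj x y) by auto. field. auto.
Qed.

Lemma centered_indicator_left_eigen n adj x y : simple_graph adj ->
  dominating n adj x -> (y < n)%nat ->
  rsum n (fun m => centered_indicator n x m * laplacian n adj m y) =
  INR n * centered_indicator n x y.
Proof.
  intros G D Hy.
  rewrite (rsum_ext n _ (fun m => (if Nat.eqb m x then laplacian n adj m y else 0)
                                  - / INR n * laplacian n adj m y)).
  - rewrite rsum_sub, rsum_mult_l, rsum_delta_lt, laplacian_col_sum,
      laplacian_dominating_row by (auto; apply D). ring.
  - intros m _. unfold centered_indicator. destruct (Nat.eqb m x); ring.
Qed.

Lemma itL_pow_dominating_row n adj x t k y : simple_graph adj ->
  dominating n adj x -> (y < n)%nat ->
  cmatpow n (itL n adj t) k x y =
  cadd (cscale (centered_indicator n x y) (cpow (0, t * INR n) k))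
       (if Nat.eqb k 0 then / INR n else 0, 0).
Proof.
  intros G D. pose proof D as [Hx _].
  assert (INR n <> 0) by (apply not_0_INR; lia).
  revert y. induction k as [| k IH]; intros y Hy.
  - unfold cmatpow, cmatid, centered_indicator.
    destruct (Nat.eqb_spec x y), (Nat.eqb_spec y x); try lia;
      apply C_ext; simpl; field; auto.
  - cbn [cmatpow]. unfold cmatmul. rewrite (csum_ext n _ _ (fun m Hm =>
      f_equal (fun z => cmul z (itL n adj t m y)) (IH m Hm))).
    set (g := if Nat.eqb k 0 then / INR n else 0).
    set (P := cpow (0, t * INR n) k).
    apply C_ext; [rewrite fst_csum | rewrite snd_csum];
      unfold itL, cmul, cadd, cscale.
    + rewrite (rsum_ext n _ (fun m => - (snd P * t) *
          (centered_indicator n x m * laplacian n adj m y))) by (intros; simpl; ring).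
      rewrite rsum_mult_l, centered_indicator_left_eigen by auto.
      cbn [cpow]. fold P. simpl. ring.
    + rewrite (rsum_ext n _ (fun m => fst P * t *
          (centered_indicator n x m * laplacian n adj m y) +
          g * t * laplacian n adj m y)) by (intros; simpl; ring).
      rewrite rsum_add, !rsum_mult_l, centered_indicator_left_eigen,
        laplacian_col_sum by auto. cbn [cpow]. fold P. simpl. ring.
Qed.

Lemma expser_dominating n adj x t y N : simple_graph adj ->
  dominating n adj x -> (y < n)%nat ->
  expser n adj t x y N =
  cadd (cscale (centered_indicator n x y) (expi_partial (t * INR n) N))
       (/ INR n, 0).
Proof.
  intros G D Hy. assert (INR n <> 0) by (apply not_0_INR; destruct D; lia).
  induction N as [| N IH].
  - unfold expser, expi_partial. cbn [csum].
    rewrite itL_pow_dominating_row by auto. apply C_ext; simpl; field; auto.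
  - unfold expser in *. rewrite expi_partial_S.
    change (csum (S (S N)) ?f) with (cadd (csum (S N) f) (f (S N))).
    rewrite IH, itL_pow_dominating_row by auto. apply C_ext; simpl; ring.
Qed.

Lemma walk_entry_dominating n adj x t y : simple_graph adj ->
  dominating n adj x -> (y < n)%nat ->
  walk_entry n adj t x y
    (centered_indicator n x y * cos (t * INR n) + / INR n,
     centered_indicator n x y * sin (t * INR n)).
Proof.
  intros G D Hy. split; cbn [fst snd].
  - apply Un_cv_affine with (fun N => fst (expi_partial (t * INR n) N)).
    + intro N. now rewrite expser_dominating by auto.
    + apply expi_partial_cos.
  - rewrite <- (Rplus_0_r (_ * sin _)).
    apply Un_cv_affine with (fun N => snd (expi_partial (t * INR n) N)).
    + intro N. now rewrite expser_dominating by auto.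
    + apply expi_partial_sin.
Qed.

Lemma cnorm2_expi_affine a b th :
  cnorm2 (a * cos th + b, a * sin th) = a ^ 2 + 2 * a * b * cos th + b ^ 2.
Proof.
  pose proof (sin2_cos2 th) as Hpyth. unfold Rsqr in Hpyth.
  unfold cnorm2. cbn [fst snd].
  transitivity (a ^ 2 * (sin th * sin th + cos th * cos th) + 2 * a * b * cos th + b ^ 2);
    [ring | rewrite Hpyth; ring].
Qed.

Lemma transition_prob_dominating n adj x t y : (1 <= n)%nat ->
  simple_graph adj -> dominating n adj x -> (y < n)%nat ->
  transition_prob n adj t x y
    (if Nat.eqb y x
     then 1 - 2 / INR n * (1 - 1 / INR n) * (1 - cos (INR n * t))
     else 2 / (INR n ^ 2) * (1 - cos (INR n * t))).
Proof.
  intros Hn G D Hy. eexists.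
  split; [exact (walk_entry_dominating n adj x t y G D Hy) |].
  assert (INR n <> 0) by (apply not_0_INR; lia).
  rewrite cnorm2_expi_affine, (Rmult_comm t). unfold centered_indicator.
  destruct (Nat.eqb y x); field; auto.
Qed.

Lemma transition_prob_unique n adj t x y p q :
  transition_prob n adj t x y p -> transition_prob n adj t x y q -> p = q.
Proof.
  intros [u [[Hu1 Hu2] ->]] [v [[Hv1 Hv2] ->]]. unfold cnorm2.
  now rewrite (UL_sequence _ _ _ Hu1 Hv1), (UL_sequence _ _ _ Hu2 Hv2).
Qed.

Lemma return_prob_bound n t : (1 <= n)%nat ->
  Rabs (1 - 2 / INR n * (1 - 1 / INR n) * (1 - cos (INR n * t)) - 1) <= 4 / INR n.
Proof.
  intros Hn. assert (H1 : 1 <= INR n) by (apply (le_INR 1); lia).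
  pose proof (COS_bound (INR n * t)).
  assert (Hr : 0 < / INR n <= 1)
    by (split; [apply Rinv_0_lt_compat
               | rewrite <- Rinv_1; apply Rinv_le_contravar]; lra).
  unfold Rdiv. rewrite !Rmult_1_l.
  set (r := / INR n) in *. set (c := cos (INR n * t)) in *.
  assert (0 <= r * (1 - r) <= r) by nra.
  assert (0 <= r * (1 - r) * (1 - c) <= r * 2) by nra.
  rewrite Rabs_left1; lra.
Qed.

Theorem proposition3p1 :
  (forall (n : nat) (adj : nat -> nat -> bool) (x : nat),
     (1 <= n)%nat -> simple_graph adj -> dominating n adj x ->
     forall (t : R) (y : nat), 0 <= t -> (y < n)%nat ->
       transition_prob n adj t x y
         (if Nat.eqb y x
          then 1 - 2 / INR n * (1 - 1 / INR n) * (1 - cos (INR n * t))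
          else 2 / (INR n ^ 2) * (1 - cos (INR n * t))))
  /\
  (forall (adjs : nat -> nat -> nat -> bool) (xs : nat -> nat) (t : R)
          (p : nat -> R),
     (forall n, (1 <= n)%nat -> simple_graph (adjs n)) ->
     (forall n, (1 <= n)%nat -> dominating n (adjs n) (xs n)) ->
     0 <= t ->
     (forall n, (1 <= n)%nat -> transition_prob n (adjs n) t (xs n) (xs n) (p n)) ->
     Un_cv p 1).
Proof.
  split.
  - intros n adj x Hn G D t y _ Hy. now apply transition_prob_dominating.
  - intros adjs xs t p G D _ P. apply Un_cv_inv_bound with 4.
    intros n Hn. pose proof (D n Hn) as [Hx _].
    pose proof (transition_prob_dominating n (adjs n) (xs n) t (xs n)
                  Hn (G n Hn) (D n Hn) Hx) as Pdom.
    rewrite Nat.eqb_refl in Pdom.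
    rewrite (transition_prob_unique _ _ _ _ _ _ _ (P n Hn) Pdom).
    apply return_prob_bound, Hn.
Qed.
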